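(* Let $d=2$ and let costs be Euclidean. For any constant $M>0$, there exist two linear classifiers $h_1,h_2:\mathbb R^2\to\{0,1\}$ and an initial feature vector $x^{(0)}\in\mathbb R^2$ such that $$\frac{c^*_{\mathrm{conj}}(x^{(0)},\{h_1,h_2\})}{c^*_{\mathrm{seq}}(x^{(0)},\{h_1,h_2\})}\ge M.$$
   Context: A linear classifier is $h(x)=\mathbf 1[w^\top x\ge b]$. For classifiers $h_1,\dots,h_k$ and cost $c(x,\hat x)=\|\hat x-x\|_2$: the sequential manipulation cost is $c^*_{\mathrm{seq}}(x^{(0)},\{h_1,\dots,h_k\})=\min\{\sum_{i=0}^{k-1}c(x^{(i)},x^{(i+1)}):x^{(1)},\dots,x^{(k)}\text{ with }h_i(x^{(i)})=1\ \forall i\}$; the conjunction manipulation cost is $c^*_{\mathrm{conj}}(x,\{h_1,\dots,h_k\})=\min\{c(x,z):h_i(z)=1\ \forall i\}$. *)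

From Stdlib Require Import Reals.
Open Scope R_scope.

Definition vec2 := (R * R)%type.

Definition dot (w x : vec2) : R := fst w * fst x + snd w * snd x.

Definition cost (x x' : vec2) : R :=
  sqrt ((fst x' - fst x) ^ 2 + (snd x' - snd x) ^ 2).

Definition lin_clf (w : vec2) (b : R) (x : vec2) : bool :=
  if Rle_dec b (dot w x) then true else false.

Definition is_min (S : R -> Prop) (m : R) : Prop :=
  S m /\ forall s, S s -> m <= s.

Definition seq_costs (h1 h2 : vec2 -> bool) (x0 : vec2) (c : R) : Prop :=
  exists x1 x2 : vec2, h1 x1 = true /\ h2 x2 = true /\
    c = cost x0 x1 + cost x1 x2.

Definition conj_costs (h1 h2 : vec2 -> bool) (x0 : vec2) (c : R) : Prop :=
  exists z : vec2, h1 z = true /\ h2 z = true /\ c = cost x0 z.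

From Stdlib Require Import Reals Lra Psatz.
Open Scope R_scope.

(* Take x0 = 0, h1 = 1[x_1 >= M x_2] and h2 = 1[x_2 >= 1].  The origin already
   passes h1, so the sequential agent only has to climb to (0, 1), at cost 1.
   A point passing both has x_2 >= 1 and hence x_1 >= M, so it lies at distance
   at least sqrt (M^2 + 1) >= M from the origin, a bound attained at (M, 1). *)

Lemma lin_clf_true_iff (w : vec2) (b : R) (x : vec2) :
  lin_clf w b x = true <-> b <= dot w x.
Proof.
  unfold lin_clf; destruct (Rle_dec b (dot w x)); intuition congruence.
Qed.

Lemma Rabs_le_sqrt_sum_sq (a b : R) : Rabs b <= sqrt (a ^ 2 + b ^ 2).
Proof.
  rewrite <- sqrt_Rsqr_abs. apply sqrt_le_1_alt. unfold Rsqr. nra.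
Qed.

Lemma snd_diff_le_cost (x x' : vec2) : snd x' - snd x <= cost x x'.
Proof.
  unfold cost. eapply Rle_trans; [apply Rle_abs | apply Rabs_le_sqrt_sum_sq].
Qed.

Lemma cost_origin (a b : R) : cost (0, 0) (a, b) = sqrt (a ^ 2 + b ^ 2).
Proof. unfold cost; cbn [fst snd]. f_equal; ring. Qed.

Lemma cost_refl (x : vec2) : cost x x = 0.
Proof.
  unfold cost. replace ((fst x - fst x) ^ 2 + (snd x - snd x) ^ 2) with 0 by ring.
  apply sqrt_0.
Qed.

Lemma conj_costs_wedge_min (M : R) : 0 <= M ->
  is_min (conj_costs (lin_clf (1, - M) 0) (lin_clf (0, 1) 1) (0, 0))
         (sqrt (M ^ 2 + 1)).
Proof.
  intros HM. split.
  - exists (M, 1). rewrite !lin_clf_true_iff, cost_origin; unfold dot; cbn [fst snd].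
    repeat split; try lra. f_equal; ring.
  - intros s [[z1 z2] [H1 [H2 ->]]].
    rewrite lin_clf_true_iff in H1, H2; unfold dot in H1, H2; cbn [fst snd] in H1, H2.
    rewrite cost_origin. apply sqrt_le_1_alt.
    assert (M <= z1) by nra. nra.
Qed.

Lemma seq_costs_wedge_min (M : R) :
  is_min (seq_costs (lin_clf (1, - M) 0) (lin_clf (0, 1) 1) (0, 0)) 1.
Proof.
  split.
  - exists (0, 0), (0, 1). rewrite !lin_clf_true_iff, cost_refl, cost_origin.
    unfold dot; cbn [fst snd]. repeat split; try lra.
    replace (0 ^ 2 + 1 ^ 2) with 1 by ring. rewrite sqrt_1. ring.
  - intros s [x1 [x2 [_ [H2 ->]]]].
    rewrite lin_clf_true_iff in H2; unfold dot in H2; cbn [fst snd] in H2.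
    pose proof (snd_diff_le_cost (0, 0) x1).
    pose proof (snd_diff_le_cost x1 x2).
    cbn [snd] in *. lra.
Qed.

Theorem mainTheorem12 :
  forall M : R, 0 < M ->
  exists (w1 w2 : vec2) (b1 b2 : R) (x0 : vec2) (cconj cseq : R),
    is_min (conj_costs (lin_clf w1 b1) (lin_clf w2 b2) x0) cconj /\
    is_min (seq_costs (lin_clf w1 b1) (lin_clf w2 b2) x0) cseq /\
    0 < cseq /\
    cconj / cseq >= M.
Proof.
  intros M HM.
  exists (1, - M), (0, 1), 0, 1, (0, 0), (sqrt (M ^ 2 + 1)), 1.
  split; [| split; [| split]].
  - apply conj_costs_wedge_min; lra.
  - apply seq_costs_wedge_min.
  - lra.
  - unfold Rdiv. rewrite Rinv_1, Rmult_1_r. apply Rle_ge.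
    rewrite <- (sqrt_pow2 M) at 1 by lra.
    apply sqrt_le_1_alt; lra.
Qed.
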